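(* Let $A$ and $B$ be C$^*$-algebras, where $A$ is unital with unit $1$. Suppose $T:A\to B$ is a linear map such that for all $a,b\in A$, $ab^*=1$ implies $T(a)T(b)^*=T(1)$. Then $T(1)$ is a projection in $B$. Consequently, the same conclusion holds when $T$ is a $^*$-homomorphism at the unit of $A$.
   Context: A map $T:A\to B$ between C$^*$-algebras is a $^*$-homomorphism at $z\in A$ if for all $a,b\in A$ with $ab^*=z$ one has $T(ab^* )=T(a)T(b)^*=T(z)$, and for all $c,d\in A$ with $c^*d=z$ one has $T(c^*d)=T(c)^*T(d)=T(z)$. A projection is an element $p$ with $p=p^*=p^2$. *)

From mathcomp Require Import all_boot all_algebra.
From mathcomp Require Import reals complex.
Set Implicit Arguments. Unset Strict Implicit. Unset Printing Implicit Defensive.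
Import GRing.Theory Num.Theory.
Local Open Scope ring_scope.
Local Open Scope complex_scope.

Definition is_cstar_algebra (R : realType) (V : lmodType R[i])
  (mul : V -> V -> V) (star : V -> V) (nrm : V -> R) : Prop :=
  (forall x y z, mul x (mul y z) = mul (mul x y) z) /\
  (forall (c : R[i]) x y z, mul (c *: x + y) z = c *: mul x z + mul y z) /\
  (forall (c : R[i]) x y z, mul x (c *: y + z) = c *: mul x y + mul x z) /\
  (forall x, 0 <= nrm x) /\
  (forall x, nrm x = 0 -> x = 0) /\
  (forall x y, nrm (x + y) <= nrm x + nrm y) /\
  (forall (c : R[i]) x, (nrm (c *: x))%:C = `|c| * (nrm x)%:C) /\
  (forall x y, nrm (mul x y) <= nrm x * nrm y) /\
  (forall u : nat -> V,
     (forall e : R, 0 < e -> exists N : nat, forall m n : nat,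
         (N <= m)%N -> (N <= n)%N -> nrm (u m - u n) < e) ->
     exists l : V, forall e : R, 0 < e -> exists N : nat, forall n : nat,
         (N <= n)%N -> nrm (u n - l) < e) /\
  (forall x y, star (x + y) = star x + star y) /\
  (forall (c : R[i]) x, star (c *: x) = c^* *: star x) /\
  (forall x, star (star x) = x) /\
  (forall x y, star (mul x y) = mul (star y) (star x)) /\
  (forall x, nrm (mul (star x) x) = nrm x ^+ 2).

Definition is_unit_of (V : Type) (mul : V -> V -> V) (one : V) : Prop :=
  forall x, mul one x = x /\ mul x one = x.

Definition is_linear_map (R : realType) (V W : lmodType R[i]) (T : V -> W) : Prop :=
  forall (c : R[i]) x y, T (c *: x + y) = c *: T x + T y.

Definition is_projection (V : Type) (mul : V -> V -> V) (star : V -> V) (p : V) : Prop :=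
  p = star p /\ p = mul p p.

Definition star_hom_at (V W : Type) (mulA : V -> V -> V) (starA : V -> V)
  (mulB : W -> W -> W) (starB : W -> W) (T : V -> W) (z : V) : Prop :=
  (forall a b, mulA a (starA b) = z ->
     T (mulA a (starA b)) = mulB (T a) (starB (T b)) /\
     mulB (T a) (starB (T b)) = T z) /\
  (forall c d, mulA (starA c) d = z ->
     T (mulA (starA c) d) = mulB (starB (T c)) (T d) /\
     mulB (starB (T c)) (T d) = T z).

From mathcomp Require Import all_boot all_algebra.
From mathcomp Require Import reals complex.
Set Implicit Arguments. Unset Strict Implicit. Unset Printing Implicit Defensive.
Import GRing.Theory Num.Theory.
Local Open Scope ring_scope.

(* Idea: [a = b = 1] is admissible since [1^* = 1], so [p := T 1] satisfies
   [p p^* = p]; applying [*] gives [p^* = p], hence [p = p p^* = p^2]. *)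

Section StarSemigroup.

Variables (V : Type) (mul : V -> V -> V) (star : V -> V).
Hypothesis starK : involutive star.
Hypothesis star_mul : forall x y, star (mul x y) = mul (star y) (star x).

Lemma star_unit (one : V) : is_unit_of mul one -> star one = one.
Proof.
move=> hone; have := congr1 star (proj1 (hone (star one))).
by rewrite star_mul starK (proj1 (hone _)).
Qed.

Lemma mul_star_eq_projection (p : V) :
  mul p (star p) = p -> is_projection mul star p.
Proof.
move=> hp; have sp : star p = p by rewrite -{1}hp star_mul starK.
by split; [rewrite sp | rewrite -[X in mul p X]sp hp].
Qed.

End StarSemigroup.

Section CstarAlgebraInvolution.

Variables (R : realType) (V : lmodType R[i]).
Variables (mul : V -> V -> V) (star : V -> V) (nrm : V -> R).
Hypothesis hV : is_cstar_algebra mul star nrm.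

Lemma cstar_starK : involutive star.
Proof. by have [_ [_ [_ [_ [_ [_ [_ [_ [_ [_ [_ [? _]]]]]]]]]]]] := hV. Qed.

Lemma cstar_star_mul x y : star (mul x y) = mul (star y) (star x).
Proof. by have [_ [_ [_ [_ [_ [_ [_ [_ [_ [_ [_ [_ [-> _]]]]]]]]]]]]] := hV. Qed.

End CstarAlgebraInvolution.

Theorem lemma2p3 (R : realType)
  (A : lmodType R[i]) (mulA : A -> A -> A) (starA : A -> A) (nrmA : A -> R)
  (B : lmodType R[i]) (mulB : B -> B -> B) (starB : B -> B) (nrmB : B -> R)
  (hA : is_cstar_algebra mulA starA nrmA) (hB : is_cstar_algebra mulB starB nrmB)
  (one : A) (hone : is_unit_of mulA one)
  (T : A -> B) (hT : is_linear_map T) :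
  ((forall a b : A, mulA a (starA b) = one ->
       mulB (T a) (starB (T b)) = T one) ->
     is_projection mulB starB (T one)) /\
  (star_hom_at mulA starA mulB starB T one ->
     is_projection mulB starB (T one)).
Proof.
have one_mul_star_one : mulA one (starA one) = one.
  by rewrite (star_unit (cstar_starK hA) (cstar_star_mul hA) hone) (proj1 (hone _)).
have T_one_projection :=
  mul_star_eq_projection (cstar_starK hB) (cstar_star_mul hB) (p := T one).
split=> [hTmul | [hTmul _]]; apply: T_one_projection.
- exact: hTmul one_mul_star_one.
- by have [_ ->] := hTmul _ _ one_mul_star_one.
Qed.
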